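(* There exists no real polynomial $P(x)=a_{11}x^{11}+a_{10}x^{10}+\cdots+a_0$ with $a_{11}>0$, $a_{10},a_9,a_8,a_7,a_6<0$, $a_5,a_4,a_3,a_2,a_1>0$, $a_0<0$, which has a single positive root, this root being simple, negative roots of total multiplicity $8$ (counted with multiplicity), and a pair of complex conjugate non-real roots with nonpositive real part. *)

From HB Require Import structures.
From mathcomp Require Import all_boot all_order all_algebra.
From mathcomp Require Import reals complex.
Set Implicit Arguments. Unset Strict Implicit. Unset Printing Implicit Defensive.
Import Order.TTheory GRing.Theory Num.Theory.
Local Open Scope ring_scope.

Section Defs.
Variable R : realType.

Definition single_simple_pos_root (P : {poly R}) : Prop :=
  exists x : R, [/\ 0 < x, root P x,
    (forall y : R, 0 < y -> root P y -> y = x) & mup x P = 1%N].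

Definition neg_roots_mult (P : {poly R}) (n : nat) : Prop :=
  exists s : seq R, [/\ uniq s,
    (forall x : R, (x \in s) = (x < 0) && root P x) &
    (\sum_(x <- s) mup x P)%N = n].

Definition nonreal_pair_nonpos_re (P : {poly R}) : Prop :=
  exists z : R[i], [/\ Im z != 0, Re z <= 0,
    root (map_poly (real_complex R) P) z &
    root (map_poly (real_complex R) P) (conjc z)].
End Defs.

(* Write P = Q * D, where D = N * (X - x0) is the monic product of the real
   linear factors (x0 the positive root, N carrying the negative roots) and Q
   is the quadratic factor vanishing at z and conj z.  Since Re z <= 0, the
   coefficients of Q satisfy q0 > 0, q1 >= 0, q2 > 0.  As N has only negative
   roots, its coefficients n_k are positive and log-concave, so n_k / n_(k+1)
   increases with k.  The coefficients of D are d_k = n_(k-1) - x0 n_k; thus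
   d_0 < 0, and a_1 = q0 d_1 + q1 d_0 > 0 forces d_1 > 0, hence d_k > 0 for
   1 <= k <= 8.  Then a_6 = q0 d_6 + q1 d_5 + q2 d_4 > 0, contradicting
   a_6 < 0; only the signs of a_11, a_6 and a_1 are used. *)

From HB Require Import structures.
From mathcomp Require Import all_boot all_order all_algebra.
From mathcomp Require Import reals complex.
From mathcomp Require Import ring lra.
Set Implicit Arguments.
Unset Strict Implicit.
Unset Printing Implicit Defensive.

Import Order.TTheory GRing.Theory Num.Theory.
Local Open Scope ring_scope.

Section Coefficients.
Variable R : nzRingType.
Implicit Types (p q : {poly R}).

Lemma coefMXsubC p (c : R) k :
  (p * ('X - c%:P))`_k = (if k is k'.+1 then p`_k' else 0) - p`_k * c.
Proof. by rewrite mulrBr coefB coefMX coefMC; case: k. Qed.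

Lemma coef1M p q : (p * q)`_1 = p`_0 * q`_1 + p`_1 * q`_0.
Proof. by rewrite coefM !big_ord_recl big_ord0 addr0. Qed.

Lemma coefM_size3 p q k : (size p <= 3)%N ->
  (p * q)`_k.+2 = p`_0 * q`_k.+2 + p`_1 * q`_k.+1 + p`_2 * q`_k.
Proof.
move=> sp; rewrite coefM !big_ord_recl big1 => [|i _].
  by rewrite addr0 !addrA !lift0 !subSS !subn0.
by rewrite nth_default ?mul0r // (leq_trans sp).
Qed.

Lemma monic_prod_XsubCX (s : seq R) (m : R -> nat) :
  \prod_(x <- s) ('X - x%:P) ^+ m x \is monic.
Proof. by apply: monic_prod => x _; apply/monic_exp/monicXsubC. Qed.

Lemma size_prod_XsubCX (s : seq R) (m : R -> nat) :
  size (\prod_(x <- s) ('X - x%:P) ^+ m x) = (\sum_(x <- s) m x).+1.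
Proof.
elim: s => [|x s IHs]; first by rewrite !big_nil size_poly1.
rewrite !big_cons size_Mmonic ?monic_prod_XsubCX ?IHs ?size_exp_XsubC ?addnS //.
by rewrite monic_neq0 // monic_exp // monicXsubC.
Qed.

End Coefficients.

Section LogConcave.
Variable R : realDomainType.
Implicit Types (p q : {poly R}) (c : R).

Definition log_concave p : Prop :=
  (forall k, (k < size p)%N -> 0 < p`_k) /\
  (forall k, p`_k * p`_k.+2 <= p`_k.+1 ^+ 2).

Lemma log_concave_coef_ge0 p : log_concave p -> forall k, 0 <= p`_k.
Proof.
case=> p_gt0 _ k; have [/p_gt0/ltW //|k_ge] := ltnP k (size p).
by rewrite nth_default.
Qed.

Lemma log_concave_coefM p :
  log_concave p -> forall k, p`_k * p`_k.+3 <= p`_k.+1 * p`_k.+2.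
Proof.
move=> lcp k; have p_ge0 := log_concave_coef_ge0 lcp; case: lcp => p_gt0 p_lc.
have [k2_lt|k2_ge] := ltnP k.+2 (size p); last first.
  by rewrite [p`_k.+3]nth_default ?mulr0 ?mulr_ge0 // (leq_trans k2_ge).
have := p_gt0 _ (ltn_trans (ltnSn _) k2_lt); have := p_gt0 _ k2_lt.
have := p_lc k; have := p_lc k.+1; have := p_ge0 k; have := p_ge0 k.+3.
nra.
Qed.

Lemma log_concave1 : log_concave 1.
Proof.
split=> k.
  by rewrite size_poly1 ltnS leqn0 => /eqP->; rewrite coefC ltr01.
by rewrite !coefC /= mulr0 expr2 mulr0.
Qed.

(* The new log-concavity defects are nonnegative combinations of old ones. *)
Lemma log_concave_mulXsubC p c :
  c < 0 -> log_concave p -> log_concave (p * ('X - c%:P)).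
Proof.
move=> c_lt0 lcp; have p_ge0 := log_concave_coef_ge0 lcp.
have p_lcM := log_concave_coefM lcp; case: lcp => p_gt0 p_lc.
have Nc_ge0 : 0 <= - c by rewrite oppr_ge0 ltW.
have [->|p_neq0] := eqVneq p 0.
  by rewrite mul0r; split=> k; rewrite ?size_poly0 // !coef0 mul0r sqr_ge0.
split=> [k|k].
  rewrite size_Mmonic ?monicXsubC // size_XsubC addn2 coefMXsubC.
  case: k => [|k] k_lt.
    by rewrite sub0r -mulrN mulr_gt0 ?oppr_gt0 ?p_gt0 ?size_poly_gt0.
  by have := p_gt0 _ k_lt; have := p_ge0 k.+1; nra.
rewrite !coefMXsubC; case: k => [|k].
  have := ler_wpM2l (sqr_ge0 c) (p_lc 0).
  have := mulr_ge0 Nc_ge0 (mulr_ge0 (p_ge0 0) (p_ge0 1)).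
  by have := sqr_ge0 p`_0; nra.
have := ler_wpM2l (sqr_ge0 c) (p_lc k.+1).
have := ler_wpM2l Nc_ge0 (p_lcM k).
by have := p_lc k; nra.
Qed.

Lemma log_concave_prod_XsubCX (s : seq R) (m : R -> nat) :
  (forall x, x \in s -> x < 0) ->
  log_concave (\prod_(x <- s) ('X - x%:P) ^+ m x).
Proof.
elim: s => [|x s IHs] s_neg; first by rewrite big_nil; exact: log_concave1.
have x_lt0 : x < 0 by rewrite s_neg ?mem_head.
have : log_concave (\prod_(y <- s) ('X - y%:P) ^+ m y).
  by apply: IHs => y ys; rewrite s_neg // in_cons ys orbT.
rewrite big_cons mulrC; elim: (m x) => [|n IHn lcp].
  by rewrite expr0 mulr1.
by rewrite exprSr mulrA; apply: log_concave_mulXsubC (IHn lcp).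
Qed.

(* The ratios [p`_k / p`_k.+1] increase with [k]. *)
Lemma log_concave_coefMXsubC_gt0 p c :
  log_concave p -> 0 < (p * ('X - c%:P))`_1 ->
  forall k, (0 < k < size p)%N -> 0 < (p * ('X - c%:P))`_k.
Proof.
move=> lcp; have p_ge0 := log_concave_coef_ge0 lcp; case: lcp => p_gt0 p_lc.
rewrite coefMXsubC subr_gt0 => c_lt [//|k] /= k_lt.
rewrite coefMXsubC subr_gt0.
have [c_le0|c_gt0] := lerP c 0.
  have pk_gt0 : 0 < p`_k by apply/p_gt0/ltnW.
  by apply: le_lt_trans pk_gt0; apply: mulr_ge0_le0.
elim: k k_lt => [//|k IHk] k_lt.
have k1_lt : (k.+1 < size p)%N := ltnW k_lt.
have pk_gt0 : 0 < p`_k by apply/p_gt0/ltnW.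
have pk1_gt0 : 0 < p`_k.+1 by apply/p_gt0.
rewrite -(ltr_pM2l pk_gt0) (@le_lt_trans _ _ (c * p`_k.+1 ^+ 2)) //.
  by rewrite mulrA mulrC (ler_wpM2l (ltW c_gt0)).
by rewrite expr2 mulrA (ltr_pM2r pk1_gt0) mulrC; apply: IHk.
Qed.

Lemma coefM_quadratic_log_concave_gt0 q p c :
  (size q <= 3)%N -> 0 < q`_0 -> 0 <= q`_1 -> 0 <= q`_2 -> 0 <= c ->
  log_concave p -> 0 < (q * (p * ('X - c%:P)))`_1 ->
  forall k, (0 < k)%N -> (k.+2 < size p)%N -> 0 < (q * (p * ('X - c%:P)))`_k.+2.
Proof.
move=> sq q0_gt0 q1_ge0 q2_ge0 c_ge0 lcp; set d := p * _.
have d0_le0 : d`_0 <= 0.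
  by rewrite coefMXsubC /= sub0r oppr_le0 mulr_ge0 // log_concave_coef_ge0.
rewrite coef1M => qd1_gt0; have d1_gt0 : 0 < d`_1 by nra.
have d_gt0 : forall k, (0 < k < size p)%N -> 0 < d`_k :=
  log_concave_coefMXsubC_gt0 lcp d1_gt0.
move=> k k_gt0 k2_lt; have k1_lt := ltnW k2_lt; have k_lt := ltnW k1_lt.
rewrite coefM_size3 //; apply: ltr_wpDr.
  by rewrite mulr_ge0 // ltW ?d_gt0 ?k_gt0.
apply: ltr_wpDr; first by rewrite mulr_ge0 // ltW // d_gt0.
by rewrite mulr_gt0 // d_gt0.
Qed.

End LogConcave.

Lemma prod_XsubCX_mup_dvdp (F : fieldType) (s : seq F) (P : {poly F}) :
  uniq s -> P != 0 -> \prod_(x <- s) ('X - x%:P) ^+ mup x P %| P.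
Proof.
elim: s P => [|x s IHs] P /=; first by rewrite big_nil dvd1p.
move=> /andP[xs us] P0.
have /dvdpP[q Pq] : ('X - x%:P) ^+ mup x P %| P by rewrite -mup_geq.
have q0 : q != 0 by apply: contraNneq P0 => q0; rewrite Pq q0 mul0r.
rewrite big_cons.
have -> : \prod_(y <- s) ('X - y%:P) ^+ mup y P =
           \prod_(y <- s) ('X - y%:P) ^+ mup y q.
  apply: eq_big_seq => y ys; rewrite Pq mupMl //.
  case: (mup x P) => [|n]; first by rewrite expr0 root1.
  rewrite root_exp_XsubC; apply: contraNN xs => /eqP <-; exact: ys.
rewrite [X in _ %| X]Pq mulrC; apply: dvdp_mul; [exact: IHs | exact: dvdpp].
Qed.

Section NonrealRoots.
Variable R : rcfType.
Implicit Types (Q : {poly R}) (z : R[i]).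

Lemma root_prod_XsubCX_nonreal (s : seq R) (m : R -> nat) z : 'Im z != 0 ->
  ~~ root (map_poly (real_complex R) (\prod_(x <- s) ('X - x%:P) ^+ m x)) z.
Proof.
move=> Imz; rewrite /root rmorph_prod horner_prod prodf_seq_neq0.
apply/allP => x _ /=; rewrite rmorphXn /= map_polyXsubC horner_exp hornerXsubC.
rewrite expf_neq0 // subr_eq0.
by apply: contraNneq Imz => ->; rewrite -complexIm.
Qed.

Lemma quadratic_nonreal_root_coef Q (u v : R) : (size Q <= 3)%N -> v != 0 ->
  root (map_poly (real_complex R) Q) (u +i* v)%C ->
  Q`_1 = - (2 * u * Q`_2) /\ Q`_0 = (u ^+ 2 + v ^+ 2) * Q`_2.
Proof.
move=> sQ v_neq0.
rewrite /root (horner_coef_wide _ (_ : size _ <= 3)%N) ?size_map_poly //.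
rewrite !big_ord_recr big_ord0 /= !coef_map /= add0r expr0 mulr1 expr1 => /eqP.
move=> /[dup] /(congr1 (@complex.Im R)) Im_eq /(congr1 (@complex.Re R)) Re_eq.
move: Im_eq Re_eq; simpc => /= Im_eq Re_eq.
have : (Q`_1 + 2 * u * Q`_2) * v = 0 by rewrite -[RHS]Im_eq; ring.
move/eqP; rewrite mulf_eq0 (negbTE v_neq0) orbF addr_eq0 => /eqP Q1E.
by split=> //; rewrite -[Q`_0]subr0 -[X in _ - X]Re_eq Q1E; ring.
Qed.

Lemma quadratic_nonreal_root_coef_sign Q z :
  (size Q <= 3)%N -> 0 < Q`_2 -> 'Im z != 0 -> 'Re z <= 0 ->
  root (map_poly (real_complex R) Q) z -> 0 < Q`_0 /\ 0 <= Q`_1.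
Proof.
case: z => u v sQ Q2_gt0; rewrite -complexIm -complexRe lecR /= => Imz u_le0.
have v_neq0 : v != 0 by apply: contraNneq Imz => ->.
move=> /(quadratic_nonreal_root_coef sQ v_neq0)[-> ->]; split; last by nra.
by rewrite mulr_gt0 // ltr_wpDl ?sqr_ge0 // exprn_even_gt0 // v_neq0 orbT.
Qed.

End NonrealRoots.

Theorem lemma5 (R : realType) (P : {poly R}) :
  size P = 12%N ->
  0 < P`_11 ->
  P`_10 < 0 -> P`_9 < 0 -> P`_8 < 0 -> P`_7 < 0 -> P`_6 < 0 ->
  0 < P`_5 -> 0 < P`_4 -> 0 < P`_3 -> 0 < P`_2 -> 0 < P`_1 ->
  P`_0 < 0 ->
  ~ [/\ single_simple_pos_root P, neg_roots_mult P 8 & nonreal_pair_nonpos_re P].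
Proof.
move=> sP P11_gt0 _ _ _ _ P6_lt0 _ _ _ _ P1_gt0 _.
case=> [[x0 [x0_gt0 _ _ mup_x0]] [s [uniq_s s_neg sum_s]] [z [Imz Rez rootz _]]].
set N := \prod_(x <- s) ('X - x%:P) ^+ mup x P.
set D := \prod_(x <- x0 :: s) ('X - x%:P) ^+ mup x P.
have D_def : D = N * ('X - x0%:P) by rewrite /D big_cons mup_x0 expr1 mulrC.
have D_monic : D \is monic by apply: monic_prod_XsubCX.
have /divpK PQ : D %| P.
  apply: prod_XsubCX_mup_dvdp; last by rewrite -size_poly_gt0 sP.
  by rewrite /= uniq_s s_neg ltNge ltW.
set Q := P %/ D in PQ.
have size_Q : size Q = 3%N.
  by rewrite size_divp ?monic_neq0 // sP size_prod_XsubCX big_cons mup_x0 sum_s.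
have Q2_gt0 : 0 < Q`_2.
  have : lead_coef P = lead_coef Q.
    by rewrite -PQ lead_coefM (monicP D_monic) mulr1.
  by rewrite !lead_coefE sP size_Q => <-.
have rootQ : root (map_poly (real_complex R) Q) z.
  move: rootz; rewrite -PQ rmorphM rootM.
  by rewrite (negbTE (root_prod_XsubCX_nonreal _ _ Imz)) orbF.
have [Q0_gt0 Q1_ge0] :=
  quadratic_nonreal_root_coef_sign (eq_leq size_Q) Q2_gt0 Imz Rez rootQ.
have N_lc : log_concave N.
  by apply: log_concave_prod_XsubCX => x; rewrite s_neg => /andP[].
have size_N : size N = 9%N by rewrite size_prod_XsubCX sum_s.
have := coefM_quadratic_log_concave_gt0 (eq_leq size_Q) Q0_gt0 Q1_ge0
  (ltW Q2_gt0) (ltW x0_gt0) N_lc.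
rewrite -D_def PQ => /(_ P1_gt0 4%N isT); rewrite size_N => /(_ isT).
by rewrite ltNge ltW.
Qed.
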